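(* Let $n\ge i\ge0$ and $I\subseteq[n]$ with $|I|=i$. Then $\mathrm{UL}_I={}^{w_I}L_i\cap\mathrm{UT}_n$, $\mathrm{UR}_I={}^{w_I}R_i\cap\mathrm{UT}_n$, and $\mathrm{UP}_I={}^{w_I}P_i\cap\mathrm{UT}_n$.
   Context: Fix the finite field $\mathbb{F}_q$; $[n]=\{1,\dots,n\}$, $[i]^c=[n]\setminus[i]$, $I^c=[n]\setminus I$. $\mathrm{GL}_n$ is the group of invertible $n\times n$ matrices over $\mathbb{F}_q$ and $\mathrm{UT}_n$ its unipotent upper triangular subgroup. Subgroups of $\mathrm{GL}_n$: $L_i=\{g:g_{r,s}\ne0\text{ only if }(r,s)\in[i]\times[i]\cup[i]^c\times[i]^c\}$, $R_i=\{g:(g-1_n)_{r,s}\ne0\text{ only if }(r,s)\in[i]\times[i]^c\}$, $P_i=\{g:g_{r,s}=0\text{ whenever }(r,s)\in[i]^c\times[i]\}$. Subgroups of $\mathrm{UT}_n$: $\mathrm{UL}_I=\{g\in\mathrm{UT}_n:(g-1_n)_{r,s}\ne0\text{ only if }(r,s)\in I\times I\cup I^c\times I^c\}$, $\mathrm{UR}_I=\{g\in\mathrm{UT}_n:(g-1_n)_{r,s}\ne0\text{ only if }(r,s)\in I\times I^c\}$, $\mathrm{UP}_I=\{g\in\mathrm{UT}_n:(g-1_n)_{r,s}=0\text{ whenever }(r,s)\in I^c\times I\}$. Writing $I=\{i_1<\dots<i_{|I|}\}$ and $I^c=\{j_1<\dots<j_{n-|I|}\}$, $w_I$ is the permutation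 of $[n]$ with $w_I(k)=i_k$ for $k\le|I|$ and $w_I(|I|+k)=j_k$. For a permutation $w$ and $H\le\mathrm{GL}_n$, ${}^wH=\{P_whP_w^{-1}:h\in H\}$ where $P_w$ is the permutation matrix with $(P_whP_w^{-1})_{w(r),w(s)}=h_{r,s}$. *)

From HB Require Import structures.
From mathcomp Require Import all_boot all_order all_algebra all_fingroup.
Set Implicit Arguments. Unset Strict Implicit. Unset Printing Implicit Defensive.
Import GRing.Theory.
Local Open Scope ring_scope.

(* Indices: [n] = {1..n} is modelled by 'I_n = {0..n-1};
   [i] = {1..i} becomes {k : 'I_n | k < i}. *)

Section Groups.
Variables (F : finFieldType) (n : nat).
Implicit Types (g : 'M[F]_n) (i : nat) (I : {set 'I_n}).

Definition GLn : {set 'M[F]_n} := [set g : 'M[F]_n | g \in unitmx].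

Definition UTn : {set 'M[F]_n} :=
  [set g : 'M[F]_n | [forall r : 'I_n, forall s : 'I_n,
     ((s < r)%N ==> (g r s == 0)) && ((r == s) ==> (g r s == 1))]].

Definition Lgrp i : {set 'M[F]_n} :=
  [set g : 'M[F]_n in GLn | [forall r : 'I_n, forall s : 'I_n,
     (g r s != 0) ==> (((r < i)%N && (s < i)%N) || (~~ (r < i)%N && ~~ (s < i)%N))]].

Definition Rgrp i : {set 'M[F]_n} :=
  [set g : 'M[F]_n in GLn | [forall r : 'I_n, forall s : 'I_n,
     ((g - 1%:M) r s != 0) ==> ((r < i)%N && ~~ (s < i)%N)]].

Definition Pgrp i : {set 'M[F]_n} :=
  [set g : 'M[F]_n in GLn | [forall r : 'I_n, forall s : 'I_n,
     (~~ (r < i)%N && (s < i)%N) ==> (g r s == 0)]].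

Definition ULgrp I : {set 'M[F]_n} :=
  [set g : 'M[F]_n in UTn | [forall r : 'I_n, forall s : 'I_n,
     ((g - 1%:M) r s != 0) ==> (((r \in I) && (s \in I)) || ((r \notin I) && (s \notin I)))]].

Definition URgrp I : {set 'M[F]_n} :=
  [set g : 'M[F]_n in UTn | [forall r : 'I_n, forall s : 'I_n,
     ((g - 1%:M) r s != 0) ==> ((r \in I) && (s \notin I))]].

Definition UPgrp I : {set 'M[F]_n} :=
  [set g : 'M[F]_n in UTn | [forall r : 'I_n, forall s : 'I_n,
     ((r \notin I) && (s \in I)) ==> ((g - 1%:M) r s == 0)]].

(* {}^w H : the matrix P_w h P_w^{-1} has entry h r s at position (w r, w s). *)
Definition pconj (w : 'S_n) g : 'M[F]_n :=
  \matrix_(a, b) g ((w^-1)%g a) ((w^-1)%g b).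

Definition conjset (w : 'S_n) (H : {set 'M[F]_n}) : {set 'M[F]_n} :=
  [set pconj w h | h in H].

End Groups.

Section wI.
Variables (n : nat) (I : {set 'I_n}).

Definition wI_seq : seq 'I_n := enum I ++ enum (~: I).

Definition wI_fun (k : 'I_n) : 'I_n := nth k wI_seq k.

Lemma wI_seq_size : size wI_seq = n.
Proof.
by rewrite /wI_seq size_cat -!cardE cardsC card_ord.
Qed.

Lemma wI_seq_uniq : uniq wI_seq.
Proof.
rewrite /wI_seq cat_uniq !enum_uniq /= andbT.
apply/hasPn => x; rewrite !mem_enum in_setC => /negbTE ->; by [].
Qed.

Lemma wI_fun_inj : injective wI_fun.
Proof.
move=> j k; rewrite /wI_fun.
have hj : (j < size wI_seq)%N by rewrite wI_seq_size ltn_ord.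
have hk : (k < size wI_seq)%N by rewrite wI_seq_size ltn_ord.
rewrite (set_nth_default j k hk) => /eqP.
rewrite nth_uniq ?wI_seq_uniq // => /eqP h; exact: val_inj.
Qed.

Definition wI : 'S_n := perm wI_fun_inj.

End wI.

From HB Require Import structures.
From mathcomp Require Import all_boot all_order all_algebra all_fingroup.
Set Implicit Arguments.
Unset Strict Implicit.
Unset Printing Implicit Defensive.
Import GRing.Theory.
Local Open Scope ring_scope.

(* Conjugating by the permutation matrix of [w_I] sends position [(r, s)] to
   [(w_I r, w_I s)], and [w_I] maps the first [|I|] indices onto [I].  Hence,
   for a unipotent upper triangular [g], each defining condition of [L_i],
   [R_i] or [P_i] on [P_w^-1 g P_w] is, after reindexing by the bijection
   [w_I], the defining condition of [UL_I], [UR_I] or [UP_I] on [g]; the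
   conditions phrased with [g] rather than [g - 1] only differ on the
   diagonal, where they hold trivially. *)

Lemma mem_wI n (I : {set 'I_n}) (k : 'I_n) : (wI I k \in I) = (k < #|I|)%N.
Proof.
rewrite permE /wI_fun /wI_seq nth_cat -cardE.
case: ltnP => [ltkI | leIk]; first by rewrite -mem_enum mem_nth // -cardE.
have ltk_compl : (k - #|I| < size (enum (~: I)))%N.
  by rewrite -cardE -(ltn_add2l #|I|) cardsC card_ord subnKC.
by have := mem_nth k ltk_compl; rewrite mem_enum in_setC => /negbTE.
Qed.

Lemma forall2_perm {T : finType} (w : {perm T}) (P : T -> T -> bool) :
  [forall r, forall s, P (w r) (w s)] = [forall r, forall s, P r s].
Proof.
apply/forallP/forallP => [Pw r | PT r]; last first.
  by apply/forallP => s; have /forallP := PT (w r); apply.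
apply/forallP => s; have /forallP/(_ ((w^-1)%g s)) := Pw ((w^-1)%g r).
by rewrite !permKV.
Qed.

Lemma submx1_neq (R : pzRingType) n (g : 'M[R]_n) r s :
  r != s -> (g - 1%:M) r s = g r s.
Proof. by rewrite !mxE => /negbTE ->; rewrite subr0. Qed.

Section PermConjugation.
Variables (F : finFieldType) (n : nat).
Implicit Types (w : 'S_n) (g : 'M[F]_n).

Lemma pconjVE w g r s : pconj (w^-1)%g g r s = g (w r) (w s).
Proof. by rewrite mxE invgK. Qed.

Lemma pconj_submx1 w g : pconj w (g - 1%:M) = pconj w g - 1%:M.
Proof. by apply/matrixP => a b; rewrite !mxE (inj_eq perm_inj). Qed.

Lemma pconj_unitmx w g : (pconj w g \in unitmx) = (g \in unitmx).
Proof.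
have -> : pconj w g = row_perm (w^-1)%g (col_perm (w^-1)%g g).
  by apply/matrixP => a b; rewrite !mxE.
by rewrite row_permE col_permE !unitmx_mul !unitmx_perm andbT.
Qed.

Lemma mem_conjset w (H : {set 'M[F]_n}) g :
  (g \in conjset w H) = (pconj (w^-1)%g g \in H).
Proof.
have pconjK v h : pconj (v^-1)%g (pconj v h) = h.
  by apply/matrixP => a b; rewrite !mxE invgK !permK.
apply/imsetP/idP => [[h Hh ->] | Hg]; first by rewrite pconjK.
by exists (pconj (w^-1)%g g); rewrite // -{1}[w]invgK pconjK.
Qed.

Lemma UT_unitmx g : g \in UTn F n -> g \in unitmx.
Proof.
rewrite inE => /forallP UTg.
have diag k : g k k = 1.
  by have /forallP/(_ k)/andP[_ /implyP/(_ (eqxx k))/eqP] := UTg k.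
have lower (a b : 'I_n) : (b < a)%N -> g a b = 0.
  by move=> ltba; have /forallP/(_ b)/andP[/implyP/(_ ltba)/eqP] := UTg a.
rewrite unitmxE -det_tr det_trig.
  by rewrite big1 ?unitr1 // => k _; rewrite mxE diag.
by apply/is_trig_mxP => a b ltab; rewrite mxE lower.
Qed.

Lemma conjset_UTE w (S H : {set 'M[F]_n}) :
  (forall g, (g \in S) = (g \in UTn F n) && (pconj (w^-1)%g g \in H)) ->
  S = conjset w H :&: UTn F n.
Proof. by move=> memS; apply/setP => g; rewrite inE mem_conjset andbC memS. Qed.

End PermConjugation.

Section UnipotentBlocks.
Variables (F : finFieldType) (n : nat) (I : {set 'I_n}).
Implicit Type g : 'M[F]_n.
Local Notation w := (wI I).
Local Notation i := #|I|.

Lemma ULgrp_pconj g :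
  (g \in ULgrp F I) = (g \in UTn F n) && (pconj (w^-1)%g g \in Lgrp F n i).
Proof.
rewrite [_ \in ULgrp _ _]inE [_ \in Lgrp _ _ _]inE.
rewrite [_ \in GLn _ _]inE pconj_unitmx.
case UTg: (g \in UTn F n) => //=; rewrite (UT_unitmx UTg) /=.
rewrite -(forall2_perm w); apply: eq_forallb => r; apply: eq_forallb => s.
rewrite pconjVE !mem_wI; have [-> | neq_rs] := eqVneq r s.
  by rewrite andbb andbb orbN !implybT.
by rewrite submx1_neq ?(inj_eq perm_inj).
Qed.

Lemma URgrp_pconj g :
  (g \in URgrp F I) = (g \in UTn F n) && (pconj (w^-1)%g g \in Rgrp F n i).
Proof.
rewrite [_ \in URgrp _ _]inE [_ \in Rgrp _ _ _]inE.
rewrite [_ \in GLn _ _]inE pconj_unitmx.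
case UTg: (g \in UTn F n) => //=; rewrite (UT_unitmx UTg) /=.
rewrite -(forall2_perm w); apply: eq_forallb => r; apply: eq_forallb => s.
by rewrite -pconj_submx1 pconjVE !mem_wI.
Qed.

Lemma UPgrp_pconj g :
  (g \in UPgrp F I) = (g \in UTn F n) && (pconj (w^-1)%g g \in Pgrp F n i).
Proof.
rewrite [_ \in UPgrp _ _]inE [_ \in Pgrp _ _ _]inE.
rewrite [_ \in GLn _ _]inE pconj_unitmx.
case UTg: (g \in UTn F n) => //=; rewrite (UT_unitmx UTg) /=.
rewrite -(forall2_perm w); apply: eq_forallb => r; apply: eq_forallb => s.
rewrite pconjVE !mem_wI; have [-> | neq_rs] := eqVneq r s; first by rewrite andNb.
by rewrite submx1_neq ?(inj_eq perm_inj).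
Qed.

End UnipotentBlocks.

Theorem lemma6p5 (F : finFieldType) (n i : nat) (I : {set 'I_n}) :
  (i <= n)%N -> #|I| = i ->
  [/\ ULgrp F I = conjset (wI I) (Lgrp F n i) :&: UTn F n,
      URgrp F I = conjset (wI I) (Rgrp F n i) :&: UTn F n
    & UPgrp F I = conjset (wI I) (Pgrp F n i) :&: UTn F n].
Proof.
move=> _ <-; split; apply: conjset_UTE.
- exact: ULgrp_pconj.
- exact: URgrp_pconj.
- exact: UPgrp_pconj.
Qed.
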